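(* Let $I\subset(0,\infty)$ be an open interval and $K\mapsto\theta^*(K)$, $K\in I$, a continuously differentiable family of stable phase-locked steady states of the Kuramoto network with coupling strength $K$. Let $\lambda_n(K)$, $v_n(K)$ ($n=2,\dots,N$) be the nonzero eigenvalues of the Jacobian $J(K)$ at $\theta^*(K)$ and corresponding orthonormal eigenvectors. Then for every $K\in I$ $$\frac{d r_{\rm uni}(\theta^*(K))}{dK}=\frac{2}{K^2\sum_{i=1}^N k_i}\sum_{n=2}^N\frac{1}{-\lambda_n(K)}\,\big(v_n(K)\cdot\omega\big)^2\;\ge\;0,$$ where $\omega=(\omega_1,\dots,\omega_N)^T$.
   Context: Kuramoto network: $N\ge 2$ oscillators with phases $\theta_i(t)$ obeying $\frac{d\theta_i}{dt}=\omega_i+K\sum_{j=1}^N A_{i,j}\sin(\theta_j-\theta_i)$, where $\omega_i\in\mathbb{R}$ are natural frequencies with $\sum_{i=1}^N\omega_i=0$, $K>0$ is the coupling strength, and $A=(A_{i,j})$ is the symmetric adjacency matrix ($A_{i,j}=A_{j,i}\in\{0,1\}$, $A_{i,i}=0$) of a connected undirected graph; $k_i=\sum_j A_{i,j}$ is the degree of node $i$. A phase-locked steady state is a vector $\theta^*\in\mathbb{R}^N$ with $\omega_i+K\sum_j A_{i,j}\sin(\theta_j^*-\theta_i^* )=0$ for all $i$. Its Jacobian $J$ is the symmetric matrix with $J_{i,j}=KA_{i,j}\cos(\theta_i^*-\theta_j^* )$ for $i\neq j$ and $J_{i,i}=-K\sum_j A_{i,j}\cos(\theta_i^*-\theta_j^*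 )$; it always has eigenvalue $\lambda_1=0$ with eigenvector $(1,\dots,1)^T$. The state is called stable if all remaining eigenvalues $\lambda_2,\dots,\lambda_N$ of $J$ are strictly negative; then $0=\lambda_1>\lambda_2\ge\dots\ge\lambda_N$, with an orthonormal eigenbasis $v_1=(1,\dots,1)^T/\sqrt N, v_2,\dots,v_N$. The order parameter is $r_{\rm uni}=\frac{1}{\sum_i k_i}\sum_{i,j}A_{i,j}\langle\cos(\theta_i-\theta_j)\rangle_t$, which for a steady state equals $r_{\rm uni}(\theta^* )=\frac{1}{\sum_i k_i}\sum_{i,j}A_{i,j}\cos(\theta_i^*-\theta_j^* )$. *)

From Stdlib Require Import Reals Lra Lia.
Open Scope R_scope.

(* Nodes and eigen-indices are 0-based: i = 0 .. N-1.
   Vectors in R^N are functions nat -> R (only indices < N matter),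
   matrices are functions nat -> nat -> R. *)

Fixpoint sumN (n : nat) (f : nat -> R) : R :=
  match n with
  | O => 0
  | S m => sumN m f + f m
  end.

Inductive reach (N : nat) (A : nat -> nat -> R) (i : nat) : nat -> Prop :=
  | reach_refl : reach N A i i
  | reach_step : forall j k, reach N A i j -> (k < N)%nat -> A j k = 1 -> reach N A i k.

Definition adjacency (N : nat) (A : nat -> nat -> R) : Prop :=
  (forall i j, (i < N)%nat -> (j < N)%nat -> A i j = 0 \/ A i j = 1) /\
  (forall i j, (i < N)%nat -> (j < N)%nat -> A i j = A j i) /\
  (forall i, (i < N)%nat -> A i i = 0) /\
  (forall i j, (i < N)%nat -> (j < N)%nat -> reach N A i j).

Definition degree (N : nat) (A : nat -> nat -> R) (i : nat) : R :=
  sumN N (fun j => A i j).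

Definition steady_state (N : nat) (A : nat -> nat -> R) (omega : nat -> R)
  (K : R) (th : nat -> R) : Prop :=
  forall i, (i < N)%nat ->
    omega i + K * sumN N (fun j => A i j * sin (th j - th i)) = 0.

Definition jac (N : nat) (A : nat -> nat -> R) (K : R) (th : nat -> R)
  (i j : nat) : R :=
  if Nat.eqb i j then - K * sumN N (fun l => A i l * cos (th i - th l))
  else K * A i j * cos (th i - th j).

(* lam, v give an orthonormal eigenbasis v_0 = (1,..,1)/sqrt N, v_1, .., v_{N-1}
   of the symmetric matrix M with eigenvalues lam 0 = 0 > lam 1, ..., lam (N-1)
   (i.e. the paper's v_1..v_N, lambda_1..lambda_N, shifted to 0-based indices);
   v n i is the i-th coordinate of the n-th eigenvector. *)
Definition stable_eigbasis (N : nat) (M : nat -> nat -> R)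
  (lam : nat -> R) (v : nat -> nat -> R) : Prop :=
  (forall i, (i < N)%nat -> v 0%nat i = 1 / sqrt (INR N)) /\
  lam 0%nat = 0 /\
  (forall n, (1 <= n < N)%nat -> lam n < 0) /\
  (forall n, (n < N)%nat -> forall i, (i < N)%nat ->
       sumN N (fun j => M i j * v n j) = lam n * v n i) /\
  (forall n m, (n < N)%nat -> (m < N)%nat ->
       sumN N (fun i => v n i * v m i) = if Nat.eqb n m then 1 else 0).

(* stability: all eigenvalues of J other than the trivial eigenvalue 0
   (eigenvector (1,..,1)) are strictly negative; for a symmetric matrix this
   is the existence of such an orthonormal eigenbasis (spectral theorem). *)
Definition stable (N : nat) (A : nat -> nat -> R) (K : R) (th : nat -> R) : Prop :=
  exists lam v, stable_eigbasis N (jac N A K th) lam v.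

Definition r_uni (N : nat) (A : nat -> nat -> R) (th : nat -> R) : R :=
  / sumN N (degree N A) *
  sumN N (fun i => sumN N (fun j => A i j * cos (th i - th j))).

Definition open_interval_pos (I : R -> Prop) : Prop :=
  (forall x, I x -> 0 < x) /\
  (forall x y z, I x -> I z -> x <= y <= z -> I y) /\
  (forall x, I x -> exists d, 0 < d /\ forall y, Rabs (y - x) < d -> I y).

(* Differentiating the steady-state equations in K shows that the velocity
   d = dtheta/dK solves J d = omega / K.  Differentiating r_uni and using the
   symmetry of A together with the steady-state equations gives
   dr_uni/dK = -(2 / (K sum_i k_i)) (omega . d).  Expanding omega . d in the
   orthonormal eigenbasis of the symmetric matrix J, the component along
   v_1 = (1,...,1)/sqrt N vanishes because sum_i omega_i = 0, and the others
   are (v_n . omega)^2 / (K lambda_n); every lambda_n is negative. *)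
From Stdlib Require Import Reals Lra Lia IndefiniteDescription.
From mathcomp Require all_boot all_algebra Rstruct.
Open Scope R_scope.

Lemma sumN_ext n f g :
  (forall i, (i < n)%nat -> f i = g i) -> sumN n f = sumN n g.
Proof.
induction n as [|n IH]; intros H; simpl; [reflexivity|].
rewrite IH by (intros; apply H; lia).
rewrite H by lia; reflexivity.
Qed.

Lemma sumN_add n f g : sumN n (fun i => f i + g i) = sumN n f + sumN n g.
Proof. induction n; simpl; [|rewrite IHn]; lra. Qed.

Lemma sumN_sub n f g : sumN n (fun i => f i - g i) = sumN n f - sumN n g.
Proof. induction n; simpl; [|rewrite IHn]; lra. Qed.

Lemma sumN_mull n c f : sumN n (fun i => c * f i) = c * sumN n f.
Proof. induction n; simpl; [|rewrite IHn]; lra. Qed.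

Lemma sumN_mulr n c f : sumN n (fun i => f i * c) = sumN n f * c.
Proof. induction n; simpl; [|rewrite IHn]; lra. Qed.

Lemma sumN_swap n m (F : nat -> nat -> R) :
  sumN n (fun i => sumN m (F i)) = sumN m (fun j => sumN n (fun i => F i j)).
Proof.
induction n as [|n IH]; simpl.
- induction m; simpl; [|rewrite <- IHm]; lra.
- rewrite IH, <- sumN_add; reflexivity.
Qed.

Lemma sumN_delta n i f :
  (i < n)%nat -> sumN n (fun j => if Nat.eqb i j then f j else 0) = f i.
Proof.
induction n as [|n IH]; intros Hi; simpl; [lia|].
destruct (Nat.eqb_spec i n) as [->|Hne].
- rewrite (sumN_ext n _ (fun j => 0 * f j)), sumN_mull; [lra|].
  intros j Hj; destruct (Nat.eqb_spec n j); [lia|ring].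
- rewrite IH by lia; lra.
Qed.

Lemma sumN_nonneg n f : (forall i, (i < n)%nat -> 0 <= f i) -> 0 <= sumN n f.
Proof.
induction n as [|n IH]; intros H; simpl; [lra|].
assert (0 <= f n) by (apply H; lia).
assert (0 <= sumN n f) by (apply IH; intros; apply H; lia).
lra.
Qed.

Definition dot (n : nat) (x y : nat -> R) : R := sumN n (fun i => x i * y i).

Definition orthonormal_family (n : nat) (v : nat -> nat -> R) : Prop :=
  forall a b, (a < n)%nat -> (b < n)%nat ->
    dot n (v a) (v b) = if Nat.eqb a b then 1 else 0.

Module OrthogonalMatrix.
Import all_boot all_algebra Rstruct.
Local Open Scope ring_scope.

Lemma sumN_bigop (n : nat) (f : nat -> R) : sumN n f = \sum_(i < n) f i.
Proof.
elim: n => [|n IH] /=; first by rewrite big_ord0.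
by rewrite big_ord_recr /= IH.
Qed.

(* V V^T = 1 forces V^T V = 1 for a square matrix V. *)
Lemma orthonormal_transpose (n : nat) (v : nat -> nat -> R) :
  orthonormal_family n v -> orthonormal_family n (fun i a => v a i).
Proof.
rewrite /orthonormal_family /dot => ortho i j /ssrnat.ltP lt_i /ssrnat.ltP lt_j.
pose V : 'M[R]_n := \matrix_(a < n, k < n) v a k.
have VVt : V *m V^T = 1%:M.
  apply/matrixP => a b; rewrite !mxE.
  under eq_bigr do rewrite !mxE.
  rewrite -(sumN_bigop _ (fun k => v a k * v b k)) ortho; try exact/ssrnat.ltP.
  case: (PeanoNat.Nat.eqb_spec a b) => [/val_inj -> | ne]; first by rewrite eqxx.
  by case: eqP => // eq_ab; case: ne; rewrite eq_ab.
move: (mulmx1C VVt) => /matrixP /(_ (Ordinal lt_i) (Ordinal lt_j)).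
rewrite !mxE; under eq_bigr do rewrite !mxE.
rewrite -(sumN_bigop _ (fun a => v a i * v a j)) /= => ->.
case: (PeanoNat.Nat.eqb_spec i j) => [eq_ij | ne].
  by subst j; rewrite (bool_irrelevance lt_i lt_j) eqxx.
by case: eqP => // -[] eq_ij; case: ne.
Qed.

End OrthogonalMatrix.

Lemma dot_parseval n v x y :
  orthonormal_family n v ->
  dot n x y = sumN n (fun a => dot n (v a) x * dot n (v a) y).
Proof.
intros ortho.
pose proof (OrthogonalMatrix.orthonormal_transpose n v ortho) as complete.
unfold dot; symmetry.
rewrite (sumN_ext n _ (fun a => sumN n (fun i => sumN n (fun j =>
           x i * y j * (v a i * v a j))))).
2:{ intros a _; rewrite <- sumN_mulr; apply sumN_ext; intros i _.
    rewrite <- sumN_mull; apply sumN_ext; intros j _; ring. }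
rewrite sumN_swap; apply sumN_ext; intros i Hi.
rewrite sumN_swap.
rewrite (sumN_ext n _ (fun j => if Nat.eqb i j then x i * y j else 0)).
- apply (sumN_delta n i (fun j => x i * y j)); assumption.
- intros j Hj; rewrite sumN_mull.
  change (sumN n (fun a => v a i * v a j)) with (dot n (fun a => v a i) (fun a => v a j)).
  rewrite complete by assumption.
  destruct (Nat.eqb i j); ring.
Qed.

Lemma dot_eigenvector n (M : nat -> nat -> R) lam w d :
  (forall i j, (i < n)%nat -> (j < n)%nat -> M i j = M j i) ->
  (forall i, (i < n)%nat -> sumN n (fun j => M i j * w j) = lam * w i) ->
  dot n w (fun i => sumN n (fun j => M i j * d j)) = lam * dot n w d.
Proof.
intros Msym eig; unfold dot.
rewrite (sumN_ext n _ (fun i => sumN n (fun j => w i * M j i * d j))).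
2:{ intros i Hi; rewrite <- sumN_mull; apply sumN_ext; intros j Hj.
    rewrite Msym by assumption; ring. }
rewrite sumN_swap, <- sumN_mull; apply sumN_ext; intros j Hj.
rewrite sumN_mulr, <- Rmult_assoc, <- eig by assumption.
f_equal; apply sumN_ext; intros i _; ring.
Qed.

(* For a = 0 the term vanishes since v 0 is constant and omega sums to 0. *)
Lemma dot_spectral n (M : nat -> nat -> R) lam v omega d c :
  stable_eigbasis n M lam v ->
  (forall i j, (i < n)%nat -> (j < n)%nat -> M i j = M j i) ->
  sumN n omega = 0 ->
  (forall i, (i < n)%nat -> sumN n (fun j => M i j * d j) = c * omega i) ->
  dot n omega d =
  - c * sumN n (fun a => if Nat.eqb a 0 then 0
                         else / (- lam a) * dot n (v a) omega ^ 2).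
Proof.
intros [v0 [_ [lam_neg [eig ortho]]]] Msym sum_omega Md.
rewrite (dot_parseval n v omega d ortho), <- sumN_mull.
apply sumN_ext; intros a Ha.
destruct (Nat.eqb_spec a 0) as [->|Ha0].
- unfold dot; rewrite (sumN_ext n _ (fun i => 1 / sqrt (INR n) * omega i)).
  + rewrite sumN_mull, sum_omega; ring.
  + intros i Hi; rewrite v0 by assumption; reflexivity.
- assert (lam a < 0) by (apply lam_neg; lia).
  assert (Hvd : lam a * dot n (v a) d = c * dot n (v a) omega).
  { rewrite <- (dot_eigenvector n M (lam a) (v a) d Msym (eig a Ha)).
    unfold dot; rewrite <- sumN_mull; apply sumN_ext; intros i Hi.
    rewrite Md by assumption; ring. }
  replace (dot n (v a) d) with (c * dot n (v a) omega / lam a)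
    by (field_simplify_eq; lra).
  field; lra.
Qed.

Lemma spectral_sum_nonneg n (lam x : nat -> R) :
  (forall a, (1 <= a < n)%nat -> lam a < 0) ->
  0 <= sumN n (fun a => if Nat.eqb a 0 then 0 else / (- lam a) * x a ^ 2).
Proof.
intros lam_neg; apply sumN_nonneg; intros a Ha.
destruct (Nat.eqb_spec a 0); [lra|].
assert (lam a < 0) by (apply lam_neg; lia).
apply Rmult_le_pos; [left; apply Rinv_0_lt_compat; lra | apply pow2_ge_0].
Qed.

Lemma Rinv_nonneg x : 0 <= x -> 0 <= / x.
Proof.
intros [Hx|<-]; [left; apply Rinv_0_lt_compat; assumption | rewrite Rinv_0; lra].
Qed.

Lemma derivable_pt_lim_sumN n (F : R -> nat -> R) (dF : nat -> R) x :
  (forall i, (i < n)%nat -> derivable_pt_lim (fun t => F t i) x (dF i)) ->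
  derivable_pt_lim (fun t => sumN n (F t)) x (sumN n dF).
Proof.
induction n as [|n IH]; intros HF; simpl.
- apply derivable_pt_lim_const.
- apply (derivable_pt_lim_plus (fun t => sumN n (F t)) (fun t => F t n)).
  + apply IH; intros; apply HF; lia.
  + apply HF; lia.
Qed.

Lemma derivable_pt_lim_locally_const f x c l del :
  0 < del -> (forall y, Rabs (y - x) < del -> f y = c) ->
  derivable_pt_lim f x l -> l = 0.
Proof.
intros del_pos f_const f_der.
apply (uniqueness_limite (fun _ => c) x); [|apply derivable_pt_lim_const].
apply (derivable_pt_lim_locally_ext f _ x (x - del) (x + del)); [lra| |assumption].
intros z Hz; apply f_const, Rabs_def1; lra.
Qed.

Lemma derivable_pt_lim_sin_sub a b da db x :
  derivable_pt_lim a x da -> derivable_pt_lim b x db ->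
  derivable_pt_lim (fun t => sin (a t - b t)) x (cos (a x - b x) * (da - db)).
Proof.
intros Ha Hb.
apply (derivable_pt_lim_comp (fun t => a t - b t) sin).
- apply (derivable_pt_lim_minus a b); assumption.
- apply derivable_pt_lim_sin.
Qed.

Lemma derivable_pt_lim_cos_sub a b da db x :
  derivable_pt_lim a x da -> derivable_pt_lim b x db ->
  derivable_pt_lim (fun t => cos (a t - b t)) x (- sin (a x - b x) * (da - db)).
Proof.
intros Ha Hb.
apply (derivable_pt_lim_comp (fun t => a t - b t) cos).
- apply (derivable_pt_lim_minus a b); assumption.
- apply derivable_pt_lim_cos.
Qed.

Lemma cos_sub_sym x y : cos (x - y) = cos (y - x).
Proof. replace (x - y) with (- (y - x)) by ring; apply cos_neg. Qed.

Lemma sin_sub_antisym x y : sin (x - y) = - sin (y - x).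
Proof. replace (x - y) with (- (y - x)) by ring; apply sin_neg. Qed.

Section Kuramoto.

Variables (N : nat) (A : nat -> nat -> R).
Hypothesis A_sym : forall i j, (i < N)%nat -> (j < N)%nat -> A i j = A j i.
Hypothesis A_diag : forall i, (i < N)%nat -> A i i = 0.

Lemma jac_sym K th i j :
  (i < N)%nat -> (j < N)%nat -> jac N A K th i j = jac N A K th j i.
Proof.
intros Hi Hj; destruct (Nat.eq_dec i j) as [->|Hij]; [reflexivity|].
unfold jac; destruct (Nat.eqb_spec i j), (Nat.eqb_spec j i); try lia.
rewrite A_sym, cos_sub_sym by assumption; reflexivity.
Qed.

Lemma jac_mul K th d i :
  (i < N)%nat ->
  sumN N (fun j => jac N A K th i j * d j) =
  K * sumN N (fun j => A i j * cos (th j - th i) * (d j - d i)).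
Proof.
intros Hi.
set (c := sumN N (fun l => A i l * cos (th i - th l))).
rewrite (sumN_ext N _ (fun j => K * (A i j * cos (th j - th i) * d j) +
                         (if Nat.eqb i j then - K * c * d j else 0))).
2:{ intros j Hj; unfold jac; fold c.
    destruct (Nat.eqb_spec i j) as [<-|_].
    - rewrite A_diag by assumption; ring.
    - rewrite cos_sub_sym; ring. }
rewrite sumN_add, sumN_mull, (sumN_delta N i (fun j => - K * c * d j)) by assumption.
rewrite (sumN_ext N (fun j => A i j * cos (th j - th i) * (d j - d i))
           (fun j => A i j * cos (th j - th i) * d j - A i j * cos (th i - th j) * d i))
  by (intros; rewrite (cos_sub_sym (th i)); ring).
rewrite sumN_sub, sumN_mulr; fold c; ring.
Qed.

Lemma steady_state_velocity omega theta K d del :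
  K <> 0 -> 0 < del ->
  (forall y, Rabs (y - K) < del -> steady_state N A omega y (theta y)) ->
  (forall i, (i < N)%nat -> derivable_pt_lim (fun t => theta t i) K (d i)) ->
  forall i, (i < N)%nat ->
  sumN N (fun j => jac N A K (theta K) i j * d j) = omega i / K.
Proof.
intros K_nz del_pos steady theta_der i Hi.
set (S t := sumN N (fun j => A i j * sin (theta t j - theta t i))).
set (dS := sumN N (fun j => A i j * (cos (theta K j - theta K i) * (d j - d i)))).
assert (eq_der : derivable_pt_lim (fun t => omega i + t * S t) K (0 + (1 * S K + K * dS))).
{ apply (derivable_pt_lim_plus (fun _ => omega i)); [apply derivable_pt_lim_const|].
  apply (derivable_pt_lim_mult (fun t => t) S); [apply derivable_pt_lim_id|].
  apply (derivable_pt_lim_sumN N (fun t j => A i j * sin (theta t j - theta t i))).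
  intros j Hj; apply (derivable_pt_lim_scal (fun t => sin (theta t j - theta t i))).
  apply derivable_pt_lim_sin_sub; apply theta_der; assumption. }
apply (derivable_pt_lim_locally_const _ K 0 _ del del_pos) in eq_der.
2:{ intros y Hy; apply (steady y Hy i Hi). }
pose proof (steady K ltac:(rewrite Rminus_diag, Rabs_R0; lra) i Hi) as steady_K.
fold (S K) in steady_K.
rewrite jac_mul by assumption.
replace (sumN N _) with dS by (apply sumN_ext; intros; ring).
replace (K * dS) with (- S K) by lra.
replace (omega i) with (- K * S K) by lra.
field; assumption.
Qed.

Lemma sumN_edges_antisym th d :
  sumN N (fun i => sumN N (fun j => A i j * (- sin (th i - th j) * (d i - d j)))) =
  2 * sumN N (fun i => sumN N (fun j => A i j * sin (th j - th i)) * d i).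
Proof.
set (T i := sumN N (fun j => A i j * sin (th j - th i)) * d i).
rewrite (sumN_ext N _ (fun i => T i - sumN N (fun j => A i j * sin (th j - th i) * d j))).
2:{ intros i Hi; unfold T; rewrite <- sumN_mulr, <- sumN_sub.
    apply sumN_ext; intros j Hj; rewrite (sin_sub_antisym (th i)); ring. }
rewrite sumN_sub, (sumN_swap N N (fun i j => A i j * sin (th j - th i) * d j)).
rewrite (sumN_ext N (fun j => sumN N (fun i => A i j * sin (th j - th i) * d j))
           (fun j => -1 * T j)), sumN_mull; [ring|].
intros j Hj; unfold T; rewrite <- sumN_mulr, <- sumN_mull.
apply sumN_ext; intros i Hi.
rewrite A_sym, (sin_sub_antisym (th j)) by assumption; ring.
Qed.

Lemma r_uni_derivative omega theta K d :
  K <> 0 -> steady_state N A omega K (theta K) ->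
  (forall i, (i < N)%nat -> derivable_pt_lim (fun t => theta t i) K (d i)) ->
  derivable_pt_lim (fun t => r_uni N A (theta t)) K
    (/ sumN N (degree N A) * (- 2 / K * dot N omega d)).
Proof.
intros K_nz steady theta_der.
replace (- 2 / K * dot N omega d) with
  (sumN N (fun i => sumN N (fun j =>
     A i j * (- sin (theta K i - theta K j) * (d i - d j))))).
- unfold r_uni.
  apply (derivable_pt_lim_scal (fun t => sumN N (fun i =>
           sumN N (fun j => A i j * cos (theta t i - theta t j))))).
  apply (derivable_pt_lim_sumN N (fun t i =>
           sumN N (fun j => A i j * cos (theta t i - theta t j)))); intros i Hi.
  apply (derivable_pt_lim_sumN N (fun t j => A i j * cos (theta t i - theta t j))).
  intros j Hj; apply (derivable_pt_lim_scal (fun t => cos (theta t i - theta t j))).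
  apply derivable_pt_lim_cos_sub; apply theta_der; assumption.
- rewrite sumN_edges_antisym; unfold dot; rewrite <- !sumN_mull.
  apply sumN_ext; intros i Hi.
  pose proof (steady i Hi) as steady_i.
  set (s := sumN N (fun j => A i j * sin (theta K j - theta K i))) in *.
  replace (omega i) with (- K * s) by lra.
  field; assumption.
Qed.

End Kuramoto.

Lemma sumN_degree_nonneg N A :
  (forall i j, (i < N)%nat -> (j < N)%nat -> A i j = 0 \/ A i j = 1) ->
  0 <= sumN N (degree N A).
Proof.
intros A01; apply sumN_nonneg; intros i Hi; apply sumN_nonneg; intros j Hj.
destruct (A01 i j Hi Hj) as [-> | ->]; lra.
Qed.

Theorem lemma2 (N : nat) (A : nat -> nat -> R) (omega : nat -> R)
  (I : R -> Prop) (theta : R -> nat -> R)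
  (lam : R -> nat -> R) (v : R -> nat -> nat -> R) :
  (2 <= N)%nat ->
  adjacency N A ->
  sumN N omega = 0 ->
  open_interval_pos I ->
  (forall i, (i < N)%nat -> exists dth : R -> R,
      (forall K, I K -> derivable_pt_lim (fun t => theta t i) K (dth K)) /\
      (forall K, I K -> continuity_pt dth K)) ->
  (forall K, I K -> steady_state N A omega K (theta K)) ->
  (forall K, I K -> stable N A K (theta K)) ->
  (forall K, I K -> stable_eigbasis N (jac N A K (theta K)) (lam K) (v K)) ->
  forall K, I K ->
    let D := 2 / (K ^ 2 * sumN N (degree N A)) *
             sumN N (fun n => if Nat.eqb n 0 then 0 else
                       / (- lam K n) * (sumN N (fun i => v K n i * omega i)) ^ 2) in
    derivable_pt_lim (fun t => r_uni N A (theta t)) K D /\ 0 <= D.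
Proof.
intros _ [A01 [A_sym [A_diag _]]] sum_omega [I_pos [_ I_open]] theta_C1 steady _
  eigbasis K HK D.
assert (K_nz : K <> 0) by (apply Rgt_not_eq, I_pos, HK).
destruct (I_open K HK) as [del [del_pos near_K]].
assert (velocity : exists d, forall i, (i < N)%nat ->
          derivable_pt_lim (fun t => theta t i) K (d i)).
{ apply (functional_choice (fun i l => (i < N)%nat ->
           derivable_pt_lim (fun t => theta t i) K l)); intros i.
  destruct (Nat.lt_ge_cases i N) as [Hi|Hi].
  - destruct (theta_C1 i Hi) as [dth [dth_der _]]; exists (dth K); auto.
  - exists 0; intros; lia. }
destruct velocity as [d theta_der].
set (Q := sumN N (fun n => if Nat.eqb n 0 then 0 else
                    / (- lam K n) * (sumN N (fun i => v K n i * omega i)) ^ 2)).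
assert (omega_d : dot N omega d = - / K * Q).
{ apply (dot_spectral N (jac N A K (theta K))).
  - apply eigbasis, HK.
  - intros i j; apply jac_sym; assumption.
  - exact sum_omega.
  - intros i Hi; unfold Rdiv; rewrite Rmult_comm.
    apply (steady_state_velocity N A A_diag omega theta K d del); auto. }
assert (Q_nonneg : 0 <= Q)
  by (destruct (eigbasis K HK) as [_ [_ [lam_neg _]]]; apply spectral_sum_nonneg, lam_neg).
pose proof (sumN_degree_nonneg N A A01) as S_nonneg.
subst D; fold Q; unfold Rdiv; rewrite Rinv_mult.
split.
- replace (2 * (/ K ^ 2 * / sumN N (degree N A)) * Q)
    with (/ sumN N (degree N A) * (- 2 / K * dot N omega d)).
  + apply r_uni_derivative; auto.
  + rewrite omega_d; set (invS := / sumN N (degree N A)); field; assumption.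
- apply Rinv_nonneg in S_nonneg.
  assert (0 <= / K ^ 2) by (apply Rinv_nonneg, pow2_ge_0).
  repeat apply Rmult_le_pos; lra.
Qed.
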